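(* Let $\alpha,\beta,\gamma\in\mathbb{Z}_2^n$ and $a\in\mathbb{Z}_2$. Then $$\mathrm{padp}_{a,0}(\alpha,\beta,\gamma)+\mathrm{padp}_{a\oplus1,1}(\alpha,\beta,\gamma)\le\mathrm{padp}_{0,0}(\alpha,\alpha,0)+\mathrm{padp}_{1,1}(\alpha,\alpha,0).$$
   Context: Indices $0,\dots,7$ are identified with $\mathbb{Z}_2^3$ via $(p_0,p_1,p_2)\leftrightarrow4p_0+2p_1+p_2$; $e_0,\dots,e_7$ are the standard basis row vectors of $\mathbb{Q}^8$. $A_0$ is $\frac14$ times the $8\times8$ matrix with rows $(4,0,0,1,0,1,1,0)$, $(0,0,0,1,0,1,0,0)$, $(0,0,0,1,0,0,1,0)$, $(0,0,0,1,0,0,0,0)$, $(0,0,0,0,0,1,1,0)$, $(0,0,0,0,0,1,0,0)$, $(0,0,0,0,0,0,1,0)$, $(0,\dots,0)$, and $(A_k)_{i,j}=(A_0)_{i\oplus k,j\oplus k}$. For $\alpha,\beta,\gamma\in\mathbb{Z}_2^n$ let $\omega_i=4\alpha_i+2\beta_i+\gamma_i$. With $L_{0,0}=(1,1,0,0,0,0,0,0)$, $L_{0,1}=(0,0,1,1,0,0,0,0)$, $L_{1,0}=(0,0,0,0,1,1,0,0)$, $L_{1,1}=(0,0,0,0,0,0,1,1)$, $\mathrm{padp}_{a,b}(\alpha,\beta,\gamma)=L_{a,b}A_{\omega_0}\cdots A_{\omega_{n-1}}e_0^T$. *)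

From mathcomp Require Import all_boot all_order all_algebra.
Set Implicit Arguments. Unset Strict Implicit. Unset Printing Implicit Defensive.
Import Order.TTheory GRing.Theory Num.Theory.
Local Open Scope ring_scope.

Definition bit (p i : nat) : bool := odd (i %/ 2 ^ p).

Definition xor8 (i k : 'I_8) : 'I_8 :=
  inord (\sum_(p < 3) (bit p i != bit p k) * 2 ^ p)%N.

Definition A0_int : seq (seq nat) :=
  [:: [:: 4; 0; 0; 1; 0; 1; 1; 0];
      [:: 0; 0; 0; 1; 0; 1; 0; 0];
      [:: 0; 0; 0; 1; 0; 0; 1; 0];
      [:: 0; 0; 0; 1; 0; 0; 0; 0];
      [:: 0; 0; 0; 0; 0; 1; 1; 0];
      [:: 0; 0; 0; 0; 0; 1; 0; 0];
      [:: 0; 0; 0; 0; 0; 0; 1; 0];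
      [:: 0; 0; 0; 0; 0; 0; 0; 0]]%N.

Definition A0 : 'M[rat]_8 :=
  \matrix_(i < 8, j < 8) ((nth 0%N (nth [::] A0_int i) j)%:R / 4).

Definition Amat (k : 'I_8) : 'M[rat]_8 :=
  \matrix_(i < 8, j < 8) A0 (xor8 i k) (xor8 j k).

Definition b2n (b : bool) : nat := if b then 1%N else 0%N.

Definition Lvec (a b : bool) : 'rV[rat]_8 :=
  \row_(j < 8) (if (j %/ 2 == 2 * b2n a + b2n b)%N then 1 else 0).

Definition e0col : 'cV[rat]_8 := \col_(i < 8) (if i == 0 :> nat then 1 else 0).

Definition omega n (alpha beta gamma : n.-tuple bool) (i : 'I_n) : 'I_8 :=
  inord (4 * b2n (tnth alpha i) + 2 * b2n (tnth beta i) + b2n (tnth gamma i))%N.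

Definition padp (a b : bool) n (alpha beta gamma : n.-tuple bool) : rat :=
  (Lvec a b *m (\prod_(i < n) Amat (omega alpha beta gamma i)) *m e0col) 0 0.

From mathcomp Require Import all_boot all_order all_algebra.
From mathcomp Require Import ring lra.
Set Implicit Arguments. Unset Strict Implicit. Unset Printing Implicit Defensive.
Import Order.TTheory GRing.Theory Num.Theory.
Local Open Scope ring_scope.

(* Read the product from the left, h_k = L A_(omega_0) ... A_(omega_(k-1)).  Column v of
   4 A_0 is 4 e_0 for v = 0, the indicator of the bitwise subsets of v for v in {3, 5, 6},
   and zero otherwise; hence after a step with index c the row h lives on the coset
   c (+) {0, 3, 5, 6}, and we show h <= a at c and h <= b on the rest of the coset.  The
   bounds start at (1, 1/2) and become (a, (a + b)/4) or (b, (a + b)/4) according as the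
   top bit alpha_i repeats or changes, keeping 0 <= b <= a <= 3 b.  For (alpha, alpha, 0)
   every index is 0 or 6, and the entries at c and c (+) 6 are at least a and b; at
   position 0 the right-hand side thus reaches the bound that the left-hand side obeys. *)

(* A copy of [xor8] on [nat]: the sealed big operator in [xor8] blocks [vm_compute]. *)
Definition xorn (i k : nat) : nat :=
  ((bit 0 i != bit 0 k) + (bit 1 i != bit 1 k) * 2 + (bit 2 i != bit 2 k) * 4)%N.

Lemma xor8E (i k : 'I_8) : xor8 i k = xorn i k :> nat.
Proof.
rewrite /xor8 !big_ord_recr big_ord0 /= add0n expn0 muln1 inordK //.
by do 3 case: (_ != _).
Qed.

Definition A0_entry (u v : nat) : nat := nth 0%N (nth [::] A0_int u) v.

Lemma AmatE (k i j : 'I_8) : Amat k i j = (A0_entry (xorn i k) (xorn j k))%:R / 4.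
Proof. by rewrite !mxE !xor8E. Qed.

Lemma Amat_ge0 (k i j : 'I_8) : 0 <= Amat k i j.
Proof. by rewrite AmatE divr_ge0. Qed.

Lemma mulmx_Amat_ge0 (h : 'rV[rat]_8) (c : 'I_8) :
  (forall i, 0 <= h 0 i) -> forall j, 0 <= (h *m Amat c) 0 j.
Proof. by move=> h_ge0 j; rewrite mxE sumr_ge0 // => i _; rewrite mulr_ge0 ?Amat_ge0. Qed.

Lemma forall_lt8 (P : nat -> bool) : all P (iota 0 8) -> forall i : 'I_8, P i.
Proof. by move/allP=> H i; apply: H; rewrite mem_iota ltn_ord. Qed.

Lemma mulmx_Amat_diag (h : 'rV[rat]_8) (c : 'I_8) : (h *m Amat c) 0 c = h 0 c.
Proof.
have Amat_col (i : 'I_8) : Amat c i c = (i == c)%:R.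
  have H : all (fun c => all (fun i =>
    A0_entry (xorn i c) (xorn c c) == 4 * (i == c))%N (iota 0 8)) (iota 0 8) by vm_compute.
  by rewrite AmatE (eqP (forall_lt8 (forall_lt8 H c) i)) natrM mulrAC divff ?mul1r.
rewrite mxE (bigD1 c) //= big1 => [|i ne_ic]; first by rewrite Amat_col eqxx mulr1 addr0.
by rewrite Amat_col (negbTE ne_ic) mulr0.
Qed.

Definition colsum (w : nat -> nat) (c j : nat) : nat :=
  sumn [seq w i * A0_entry (xorn i c) (xorn j c) | i <- iota 0 8].

Lemma sum_natr_mul_Amat (w : nat -> nat) (c j : 'I_8) :
  \sum_(i < 8) (w i)%:R * Amat c i j = (colsum w c j)%:R / 4.
Proof.
rewrite /colsum sumnE big_map -[iota 0 8]/(index_iota 0 8) big_mkord natr_sum.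
by rewrite mulr_suml; apply: eq_bigr => i _; rewrite AmatE natrM mulrA.
Qed.

Definition two_bits (d : nat) : bool := d \in [:: 3; 5; 6]%N.

Definition envelope (R : nmodType) (a b : R) (c j : nat) : R :=
  a *+ (xorn j c == 0%N) + b *+ two_bits (xorn j c).

Lemma natr_envelope (R : pzSemiRingType) (m n c j : nat) :
  (envelope m n c j)%:R = envelope m%:R n%:R c j :> R.
Proof.
rewrite /envelope; case: (_ == _); case: two_bits.
all: rewrite /= ?mulr1n ?mulr0n ?addr0 ?add0r //.
exact: natrD.
Qed.

Lemma envelopeD (R : nmodType) (a b a' b' : R) c j :
  envelope a b c j + envelope a' b' c j = envelope (a + a') (b + b') c j.
Proof. by rewrite /envelope addrACA !mulrnDl. Qed.

Lemma envelopeMl (R : pzSemiRingType) (a b x : R) c j :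
  x * envelope a b c j = envelope (x * a) (x * b) c j.
Proof. by rewrite /envelope mulrDr !mulrnAr. Qed.

Lemma envelope_split (a b : rat) c i :
  envelope a b c i = (a - b) * (envelope 1%N 0%N c i)%:R + b * (envelope 1%N 1%N c i)%:R.
Proof. by rewrite !natr_envelope !envelopeMl envelopeD; congr envelope; ring. Qed.

Lemma envelope_combine (a b : rat) (t : bool) c j :
  (a - b) * ((envelope (4 * t)%N 1%N c j)%:R / 4) + b * ((envelope 4%N 2%N c j)%:R / 4)
    = envelope (if t then a else b) ((a + b) / 4) c j.
Proof.
by rewrite !natr_envelope /envelope; case: t; case: (_ == _); case: two_bits => /=; field.
Qed.

Lemma envelope_ord0_le (a b : rat) (c : 'I_8) :
  0 <= b <= a -> envelope a b c 0%N <= if bit 2 c then b else a.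
Proof.
case/andP=> b_ge0 b_le_a; rewrite /envelope.
by case: c => -[|[|[|[|[|[|[|[|//]]]]]]]] _ /=; rewrite ?mulr1n ?mulr0n ?addr0 ?add0r; lra.
Qed.

(* A coset of {0, 3, 5, 6} meets each set {u | u is a bitwise subset of v}, v in {3, 5, 6},
   in exactly two points, at most one of which is the coset representative. *)
Lemma colsum_point_le (c c' j : 'I_8) :
  (colsum (envelope 1%N 0%N c) c' j <= envelope (4 * (bit 2 c == bit 2 c'))%N 1%N c' j)%N.
Proof.
have H : all (fun c => all (fun c' => all (fun j =>
  (colsum (envelope 1%N 0%N c) c' j <= envelope (4 * (bit 2 c == bit 2 c'))%N 1%N c' j)%N)
  (iota 0 8)) (iota 0 8)) (iota 0 8) by vm_compute.
exact: forall_lt8 (forall_lt8 (forall_lt8 H c) c') j.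
Qed.

Lemma colsum_coset_le (c c' j : 'I_8) :
  (colsum (envelope 1%N 1%N c) c' j <= envelope 4%N 2%N c' j)%N.
Proof.
have H : all (fun c => all (fun c' => all (fun j =>
  (colsum (envelope 1%N 1%N c) c' j <= envelope 4%N 2%N c' j)%N)
  (iota 0 8)) (iota 0 8)) (iota 0 8) by vm_compute.
exact: forall_lt8 (forall_lt8 (forall_lt8 H c) c') j.
Qed.

Lemma sum_envelope_mul_Amat_le (a b : rat) (c c' j : 'I_8) : 0 <= b <= a ->
  \sum_(i < 8) envelope a b c i * Amat c' i j
    <= envelope (if bit 2 c == bit 2 c' then a else b) ((a + b) / 4) c' j.
Proof.
case/andP=> b_ge0 b_le_a.
have -> : \sum_(i < 8) envelope a b c i * Amat c' i j =
    (a - b) * ((colsum (envelope 1%N 0%N c) c' j)%:R / 4)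
    + b * ((colsum (envelope 1%N 1%N c) c' j)%:R / 4).
  rewrite -!sum_natr_mul_Amat !mulr_sumr -big_split /=.
  by apply: eq_bigr => i _; rewrite envelope_split; ring.
rewrite -envelope_combine; apply: lerD; rewrite ler_wpM2l ?subr_ge0 // ler_wpM2r //.
  by rewrite ler_nat colsum_point_le.
by rewrite ler_nat colsum_coset_le.
Qed.

Definition dominated (h : 'rV[rat]_8) (a b : rat) (c : nat) :=
  forall j : 'I_8, 0 <= h 0 j <= envelope a b c j.

Lemma dominated_mulmx h a b (c c' : 'I_8) : 0 <= b <= a -> dominated h a b c ->
  dominated (h *m Amat c') (if bit 2 c == bit 2 c' then a else b) ((a + b) / 4) c'.
Proof.
move=> ba h_dom j; rewrite mulmx_Amat_ge0 => [/=|i]; last by case/andP: (h_dom i).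
rewrite mxE; apply: le_trans _ (sum_envelope_mul_Amat_le c c' j ba).
by apply: ler_sum => i _; rewrite ler_wpM2r ?Amat_ge0 //; case/andP: (h_dom i).
Qed.

Definition start (a : bool) : 'rV[rat]_8 := Lvec a false + Lvec (~~ a) true.

Definition start_nat (a : bool) (i : nat) : nat :=
  ((i %/ 2 == 2 * b2n a) + (i %/ 2 == 2 * b2n (~~ a) + 1))%N.

Lemma startE a (i : 'I_8) : start a 0 i = (start_nat a i)%:R.
Proof. by rewrite !mxE /start_nat addn0 natrD; case: (_ == _); case: (_ == _). Qed.

Lemma start_ge0 a (i : 'I_8) : 0 <= start a 0 i.
Proof. by rewrite startE. Qed.

Lemma colsum_start_le a (c j : 'I_8) : (colsum (start_nat a) c j <= envelope 4%N 2%N c j)%N.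
Proof.
have H : all (fun a => all (fun c => all (fun j =>
  (colsum (start_nat a) c j <= envelope 4%N 2%N c j)%N) (iota 0 8)) (iota 0 8))
  [:: false; true] by vm_compute.
by move/allP/(_ a): H; case: a => /(_ isT) H; exact: forall_lt8 (forall_lt8 H c) j.
Qed.

Lemma dominated_start a (c : 'I_8) : dominated (start a *m Amat c) 1 (1 / 2) c.
Proof.
move=> j; rewrite mulmx_Amat_ge0 => [/=|i]; last exact: start_ge0.
rewrite mxE (eq_bigr _ (fun i _ => congr1 (fun x => x * _) (startE a i))).
rewrite sum_natr_mul_Amat ler_pdivrMr // mulrC envelopeMl.
rewrite (_ : envelope _ _ c j = (envelope 4%N 2%N c j)%:R) ?ler_nat ?colsum_start_le //.
by rewrite natr_envelope; congr envelope; field.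
Qed.

Definition index8 (x y z : bool) : 'I_8 := inord (4 * b2n x + 2 * b2n y + b2n z).

Lemma index8E x y z : index8 x y z = (4 * b2n x + 2 * b2n y + b2n z)%N :> nat.
Proof. by rewrite inordK //; case: x; case: y; case: z. Qed.

Lemma bit2_index8 x y z : bit 2 (index8 x y z) = x.
Proof. by rewrite index8E; case: x; case: y; case: z. Qed.

Definition pole (t : bool) : 'I_8 := index8 t t false.

Lemma pole_false : pole false = 0.
Proof. by apply: val_inj; rewrite /= index8E. Qed.

Lemma start_pole t : start false 0 (pole t) = 1.
Proof. by rewrite startE /pole /start_nat index8E; case: t. Qed.

Lemma mulmx_Amat_pole_ge (h : 'rV[rat]_8) t : (forall i, 0 <= h 0 i) ->
  (h 0 (pole t) + h 0 (pole (~~ t))) / 4 <= (h *m Amat (pole t)) 0 (pole (~~ t)).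
Proof.
move=> h_ge0.
have Amat_pole (i : 'I_8) :
    i \in [:: pole t; pole (~~ t)] -> Amat (pole t) i (pole (~~ t)) = 1 / 4.
  by rewrite !inE => /orP[] /eqP ->; rewrite AmatE /pole !index8E; case: t.
have ne_pole : pole (~~ t) != pole t.
  by apply/negP => /eqP/(congr1 (@nat_of_ord 8)); rewrite /pole !index8E; case: t {Amat_pole}.
rewrite mxE (bigD1 (pole t)) // (bigD1 (pole (~~ t))) //=.
rewrite !Amat_pole ?inE ?eqxx ?orbT // addrA -mulrDl mul1r lerDl.
by rewrite sumr_ge0 // => i _; rewrite mulr_ge0 ?Amat_ge0.
Qed.

Definition traj (L : 'rV[rat]_8) (g : nat -> 'I_8) (k : nat) : 'rV[rat]_8 :=
  L *m \prod_(i < k) Amat (g i).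

Lemma traj0 L g : traj L g 0 = L.
Proof. by rewrite /traj big_ord0 mulmx1. Qed.

Lemma trajS L g k : traj L g k.+1 = traj L g k *m Amat (g k).
Proof. by rewrite /traj big_ord_recr -mulmxE mulmxA. Qed.

Lemma traj_ge0 (L : 'rV[rat]_8) g k :
  (forall i, 0 <= L 0 i) -> forall i, 0 <= traj L g k 0 i.
Proof.
move=> L_ge0; elim: k => [|k IH]; first by rewrite traj0.
by rewrite trajS; apply: mulmx_Amat_ge0.
Qed.

Fixpoint weights (s : nat -> bool) (k : nat) : rat * rat :=
  if k is k'.+1 then
    let ab := weights s k' in (if s k' == s k then ab.1 else ab.2, (ab.1 + ab.2) / 4)
  else (1, 1 / 2).

Lemma weights_bounds s k :
  [/\ 0 <= (weights s k).2, (weights s k).2 <= (weights s k).1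
    & (weights s k).1 <= 3 * (weights s k).2].
Proof.
elim: k => [|k [b_ge0 b_le_a a_le_3b]] /=; first by split; lra.
by case: (_ == _); split => /=; lra.
Qed.

Lemma traj_start_dominated a (g : nat -> 'I_8) (s : nat -> bool) :
  (forall m, bit 2 (g m) = s m) ->
  forall k, dominated (traj (start a) g k.+1) (weights s k).1 (weights s k).2 (g k).
Proof.
move=> gs; elim=> [|k IH]; first by rewrite trajS traj0; apply: dominated_start.
have [b_ge0 b_le_a _] := weights_bounds s k.
by rewrite trajS /= -!gs; apply: dominated_mulmx; rewrite ?b_ge0.
Qed.

Lemma traj_pole_ge (L : 'rV[rat]_8) (g : nat -> 'I_8) (s : nat -> bool) :
  (forall i, 0 <= L 0 i) -> (forall t, 1 <= L 0 (pole t)) ->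
  (forall m, g m = pole (s m)) ->
  forall k, (weights s k).1 <= traj L g k.+1 0 (pole (s k))
         /\ (weights s k).2 <= traj L g k.+1 0 (pole (~~ s k)).
Proof.
move=> L_ge0 L_ge1 gs; elim=> [|k [IHa IHb]].
  rewrite trajS traj0 gs mulmx_Amat_diag; split=> //.
  apply: le_trans (mulmx_Amat_pole_ge _ L_ge0).
  by have := L_ge1 (s 0); have := L_ge1 (~~ s 0); rewrite /=; lra.
have h_ge0 := traj_ge0 g k.+1 L_ge0.
rewrite trajS gs mulmx_Amat_diag /=; split.
  by move: IHa IHb; case: (s k); case: (s k.+1).
apply: le_trans (mulmx_Amat_pole_ge _ h_ge0).
by move: IHa IHb; case: (s k); case: (s k.+1) => /=; lra.
Qed.

Lemma traj_start_le a (gL gR : nat -> 'I_8) (s : nat -> bool) :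
  (forall m, bit 2 (gL m) = s m) -> (forall m, gR m = pole (s m)) ->
  forall k, traj (start a) gL k 0 0 <= traj (start false) gR k 0 0.
Proof.
move=> gLs gRs [|k]; first by rewrite !traj0 !startE; case: a.
have [b_ge0 b_le_a _] := weights_bounds s k.
have /andP[_ left_le] := traj_start_dominated a gLs k 0.
have start_ge1 t : 1 <= start false 0 (pole t) by rewrite start_pole.
have [right_ge_a right_ge_b] := traj_pole_ge (@start_ge0 false) start_ge1 gRs k.
apply: le_trans left_le _; apply: le_trans (envelope_ord0_le _ _) _; first by rewrite b_ge0.
by rewrite gLs -pole_false; case: (s k) right_ge_a right_ge_b.
Qed.

Lemma mulmx_e0col (M : 'rV[rat]_8) : (M *m e0col) 0 0 = M 0 0.
Proof.
rewrite mxE (bigD1 0) //= big1 => [|i /negbTE ne_i0]; first by rewrite mxE mulr1 addr0.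
by rewrite mxE -[i == 0 :> nat]/(i == 0) ne_i0 mulr0.
Qed.

Definition index_seq (x y z : seq bool) (m : nat) : 'I_8 :=
  index8 (nth false x m) (nth false y m) (nth false z m).

Lemma padp_start a n (alpha beta gamma : n.-tuple bool) :
  padp a false alpha beta gamma + padp (~~ a) true alpha beta gamma
  = traj (start a) (index_seq alpha beta gamma) n 0 0.
Proof.
have omegaE : \prod_(i < n) Amat (omega alpha beta gamma i)
    = \prod_(i < n) Amat (index_seq alpha beta gamma i).
  by apply: eq_bigr => i _; rewrite /omega /index_seq /index8 !(tnth_nth false).
by rewrite /padp !mulmx_e0col omegaE /traj /start mulmxDl [RHS]mxE.
Qed.

Theorem lemma3 (n : nat) (alpha beta gamma : n.-tuple bool) (a : bool) :
  padp a false alpha beta gamma + padp (~~ a) true alpha beta gamma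
  <= padp false false alpha alpha [tuple of nseq n false]
     + padp true true alpha alpha [tuple of nseq n false].
Proof.
rewrite padp_start (padp_start false).
apply: (@traj_start_le a _ _ (nth false alpha)) => m; first exact: bit2_index8.
by rewrite /index_seq nth_nseq if_same.
Qed.
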